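(* For every pair of integers $k\ge3$ and $f\ge1$ there is $n_1=n_1(k,f)$ such that for every $n\ge n_1$ divisible by $k$, the graph $B_{k,n/k}$ (which has $n$ vertices) is $\frac{1}{2k^2}$-far from being induced $\{C_4,B_{k,f}\}$-free.
   Context: For integers $k\ge3$ and $m\ge1$, $B_{k,m}$ is the graph obtained from the cycle $C_k$ by replacing each vertex by a clique of size $m$ and each edge by a complete bipartite graph between the corresponding cliques (non-adjacent vertices of $C_k$ give empty bipartite graphs). An $n$-vertex graph is $\varepsilon$-far from a property if at least $\varepsilon n^2$ edge additions/deletions are needed to obtain the property. A graph is induced $\mathcal F$-free if it contains no induced subgraph isomorphic to any member of $\mathcal F$. *)

From mathcomp Require Import all_boot all_order all_algebra.
Set Implicit Arguments. Unset Strict Implicit. Unset Printing Implicit Defensive.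
Import Order.TTheory GRing.Theory Num.Theory.

Definition is_graph (V : finType) (e : rel V) : Prop :=
  symmetric e /\ irreflexive e.

Definition cyc_adj (k : nat) (i j : 'I_k) : bool :=
  (val j == (val i).+1 %% k) || (val i == (val j).+1 %% k).

Arguments cyc_adj : clear implicits.

Definition C4 : rel 'I_4 := fun i j => (i != j) && cyc_adj 4 i j.

(* B_{k,m}: blow-up of C_k, each vertex replaced by a clique of size m,
   each edge by a complete bipartite graph. Vertex (i,a): clique i, index a. *)
Definition Bgraph (k m : nat) : rel ('I_k * 'I_m) :=
  fun x y => (x != y) && ((x.1 == y.1) || cyc_adj k x.1 y.1).

Arguments Bgraph : clear implicits.
Definition induced_in (W V : finType) (eH : rel W) (e : rel V) : Prop :=
  exists h : W -> V, injective h /\ forall x y, eH x y = e (h x) (h y).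

Definition ind_free_C4_B (k f : nat) (V : finType) (e : rel V) : Prop :=
  ~ induced_in C4 e /\ ~ induced_in (Bgraph k f) e.

(* Number of unordered vertex pairs on which e and e' differ
   (ordered differing pairs counted, then halved; exact for symmetric rels). *)
Definition edit_dist (V : finType) (e e' : rel V) : nat :=
  #|[set p : V * V | (p.1 != p.2) && (e p.1 p.2 != e' p.1 p.2)]| %/ 2.

Definition far_from (V : finType) (e : rel V) (P : rel V -> Prop) (eps : rat)
  : Prop :=
  forall e' : rel V, is_graph e' -> P e' ->
    (eps * (#|V| ^ 2)%:R <= (edit_dist e e')%:R)%R.

(* Let [e] be an induced {C4, B_{k,f}}-free graph at edit distance less than
   [m^2/2] from [B_{k,m}].  A transversal (one vertex in each of the [k] parts) is spoiled by
   a differing pair in two distinct parts, and each such pair lies on [m^(k-2)] transversals,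
   so at least half of the [m^k] transversals see exactly the cycle [C_k] in [e].  A
   supersaturation argument, fixing one coordinate at a time and choosing in it a common
   [F]-set of many fibres, yields a box [S_0 * ... * S_(k-1)] with [|S_i| = F] all of whose
   transversals do.  Between parts of the box [e] is then the blow-up of [C_k]; C4-freeness
   forces two vertices of a part to be adjacent (their non-adjacent common neighbours in the
   two cycle-neighbouring parts would otherwise close an induced C4), so the box induces
   [B_{k,f}].  For [k = 3] the two cycle-neighbours of a part are adjacent, and the argument
   only shows that a non-edge in one part makes the next part a clique; the parts are then
   taken of size [3f], since [B_{3,f}] is the complete graph on [3f] vertices. *)

From mathcomp Require Import all_boot all_order all_algebra zify ring.
Set Implicit Arguments. Unset Strict Implicit. Unset Printing Implicit Defensive.
Import GRing.Theory Num.Theory.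

Lemma card_indicator_sum (T : finType) (A : {set T}) :
  #|A| = \sum_(x : T) (x \in A : nat).
Proof. by rewrite -sum1_card big_mkcond /=; apply: eq_bigr => x _; case: (x \in A). Qed.

Lemma sum_card_exchange (I T : finType) (R : {set I}) (A : I -> {set T}) :
  \sum_(i in R) #|A i| = \sum_(x : T) #|[set i in R | x \in A i]|.
Proof.
under eq_bigr do rewrite card_indicator_sum.
rewrite exchange_big /=; apply: eq_bigr => x _.
rewrite card_indicator_sum big_mkcond /=; apply: eq_bigr => i _.
by rewrite !inE; case: (i \in R).
Qed.

Lemma sum_card_pairs (I T : finType) (A : I -> {set T}) :
  \sum_(i : I) #|A i| = #|[set ix : I * T | ix.2 \in A ix.1]|.
Proof.
under eq_bigr do rewrite card_indicator_sum.
rewrite card_indicator_sum pair_big /=.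
by apply: eq_bigr => -[i x] _; rewrite inE.
Qed.

Lemma card_le_sum_cover (I T : finType) (B : {set T}) (R : {set I}) (C : I -> {set T}) :
  (forall t, t \in B -> exists2 i, i \in R & t \in C i) ->
  #|B| <= \sum_(i in R) #|C i|.
Proof.
move=> covered; rewrite sum_card_exchange card_indicator_sum leq_sum // => t _.
case: (boolP (t \in B)) => // /covered [i iR tCi].
by rewrite card_gt0; apply/set0Pn; exists i; rewrite inE iR.
Qed.

Section CommonSubset.

Variables (P : finType) (m D : nat) (N : P -> {set 'I_m}).

Definition dense_members := [set p | m <= 2 * D * #|N p|].

Lemma many_dense_members : 0 < m ->
  #|P| * m <= D * \sum_(p : P) #|N p| -> #|P| <= 2 * D * #|dense_members|.
Proof.
move=> m0 dense_on_average; set Q := dense_members.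
have splitQ : \sum_p #|N p| = \sum_(p in Q) #|N p| + \sum_(p in ~: Q) #|N p|.
  rewrite (bigID (mem Q)) /=; congr (_ + _).
  by apply: eq_bigl => p; rewrite in_setC.
have sumQ : \sum_(p in Q) #|N p| <= #|Q| * m.
  rewrite -sum_nat_const; apply: leq_sum => p _.
  by rewrite -[m in _ <= m]card_ord max_card.
have sumQC : 2 * D * \sum_(p in ~: Q) #|N p| <= #|~: Q| * m.
  rewrite big_distrr /= -sum_nat_const; apply: leq_sum => p.
  by rewrite in_setC inE -ltnNge => /ltnW.
have QCP : #|~: Q| <= #|P| by apply: max_card.
have DsumQ := leq_mul (leqnn D) sumQ.
suff : #|P| * m <= 2 * D * #|Q| * m by rewrite leq_pmul2r.
nia.
Qed.

Lemma popular_point (R : {set P}) (T : {set 'I_m}) :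
  {in R, forall p, m <= 2 * D * #|N p|} -> 4 * D * #|T| < m -> 0 < #|R| ->
  exists2 v, v \notin T & #|R| <= 4 * D * #|[set p in R | v \in N p]|.
Proof.
move=> Rdense Tsmall R0.
apply/exists_inP; apply: contraT; rewrite negb_exists_in => /forall_inP unpopular.
(* Count the incidences between [R] and the points outside [T] in two ways. *)
pose S := \sum_(p in R) #|N p :\: T|.
have upper : 4 * D * S <= m * (#|R| - 1).
  have -> : m * (#|R| - 1) = \sum_(v < m) (#|R| - 1).
    by rewrite big_const_ord iter_addn_0 mulnC.
  rewrite /S sum_card_exchange big_distrr /= leq_sum // => v _.
  case vT: (v \in T).
    suff -> : [set p in R | v \in N p :\: T] = set0 by rewrite cards0 muln0 leq0n.
    by apply/setP => p; rewrite !inE vT andbF.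
  have := unpopular v (negbT vT); rewrite -ltnNge => lt.
  have -> : [set p in R | v \in N p :\: T] = [set p in R | v \in N p].
    by apply/setP => p; rewrite !inE vT.
  by rewrite subn1 -ltnS prednK // (leq_ltn_trans _ lt).
have lower : #|R| * m.+1 <= 4 * D * S.
  rewrite /S big_distrr /= -sum_nat_const leq_sum // => p pR.
  have NT : #|N p| - #|T| <= #|N p :\: T|.
    by rewrite cardsD leq_sub2l // subset_leq_card // subsetIr.
  have := leq_mul (leqnn (4 * D)) NT; rewrite mulnBr.
  move: Tsmall (Rdense p pR); rewrite -!mulnA.
  by move: (D * #|T|) (D * #|N p|) (D * #|N p :\: T|) => x y z; lia.
nia.
Qed.

Lemma greedy_common_subset (R : {set P}) (j : nat) :
  {in R, forall p, m <= 2 * D * #|N p|} -> 0 < #|R| -> 4 * D * j < m ->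
  exists T : {set 'I_m},
    #|T| = j /\ #|R| <= (4 * D) ^ j * #|[set p in R | T \subset N p]|.
Proof.
move=> Rdense R0; elim: j => [|j IH] jsmall.
  exists set0; rewrite cards0 expn0 mul1n; split=> //.
  by apply: subset_leq_card; apply/subsetP => p pR; rewrite inE pR sub0set.
have [|T [cardT RT]] := IH.
  by apply: leq_ltn_trans jsmall; rewrite leq_mul2l leqnSn orbT.
set RT' := [set p in R | T \subset N p] in RT.
have [|||v vT popular] := @popular_point RT' T.
- by move=> p; rewrite inE => /andP [/Rdense].
- by rewrite cardT; apply: leq_ltn_trans jsmall; rewrite leq_mul2l leqnSn orbT.
- by move/(leq_trans R0): RT; rewrite muln_gt0 => /andP [].
exists (v |: T); split; first by rewrite cardsU1 vT cardT.
apply: (leq_trans RT); rewrite expnSr -mulnA leq_mul2l (leq_trans popular) ?orbT //.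
rewrite leq_mul2l subset_leq_card ?orbT //; apply/subsetP => p.
by rewrite !inE subUset sub1set => /andP [/andP [-> ->] ->].
Qed.

Lemma common_subset (F : nat) : 4 * D * F < m -> 0 < #|P| ->
  #|P| * m <= D * \sum_(p : P) #|N p| ->
  exists T : {set 'I_m},
    #|T| = F /\ #|P| <= 2 * D * (4 * D) ^ F * #|[set p | T \subset N p]|.
Proof.
move=> Fsmall P0 dense_on_average.
have PQ := many_dense_members (leq_ltn_trans (leq0n _) Fsmall) dense_on_average.
have [||T [cardT QT]] := @greedy_common_subset dense_members F _ _ Fsmall.
- by move=> p; rewrite inE.
- by move/(leq_trans P0): PQ; rewrite muln_gt0 => /andP [].
exists T; split=> //; apply: (leq_trans PQ).
rewrite -(mulnA (2 * D)) leq_mul2l (leq_trans QT) ?orbT //.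
by rewrite leq_mul2l subset_leq_card ?orbT //; apply/subsetP => p; rewrite !inE => /andP [].
Qed.

End CommonSubset.

Definition ffun_upd (I : finType) (T : Type) (t : {ffun I -> T}) (j : I) (v : T) :
  {ffun I -> T} := [ffun i => if i == j then v else t i].

Lemma ffun_upd_same (I : finType) (T : Type) (t : {ffun I -> T}) j v :
  ffun_upd t j v j = v.
Proof. by rewrite ffunE eqxx. Qed.

Lemma ffun_upd_other (I : finType) (T : Type) (t : {ffun I -> T}) j v i :
  i != j -> ffun_upd t j v i = t i.
Proof. by rewrite ffunE => /negbTE ->. Qed.

Lemma sum_card_fibres (I T : finType) (G : {set {ffun I -> T}}) (j : I) :
  \sum_(t : {ffun I -> T}) #|[set v | ffun_upd t j v \in G]| = #|G| * #|T|.
Proof.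
rewrite sum_card_pairs -cardsT -cardsX.
pose swap (tv : {ffun I -> T} * T) := (ffun_upd tv.1 j tv.2, tv.1 j).
have swapK : involutive swap.
  move=> [t v]; rewrite /swap /= ffun_upd_same; congr (_, _).
  by apply/ffunP => i; rewrite !ffunE; case: eqP => // ->.
rewrite -(card_preimset (setX G setT) (inv_inj swapK)); apply: eq_card => -[t v].
by rewrite !inE andbT.
Qed.

(* [common_subset] loses a density factor [2 D (4 D) ^ F] on each coordinate. *)
Fixpoint box_loss (F j : nat) : nat :=
  if j is j'.+1 then 2 * box_loss F j' * (4 * box_loss F j') ^ F else 2.

Lemma box_loss_gt0 F j : 0 < box_loss F j.
Proof. by elim: j => //= j IH; rewrite !muln_gt0 IH expn_gt0 muln_gt0 IH. Qed.

Lemma box_loss_mono F : {homo box_loss F : i j / i <= j}.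
Proof.
apply: (homo_leq leqnn leq_trans) => j /=.
by rewrite mulnAC leq_pmull // muln_gt0 expn_gt0 muln_gt0 box_loss_gt0.
Qed.

Section DenseBox.

Variables (k m : nat) (H : {set {ffun 'I_k -> 'I_m}}).

Definition box_good (j : nat) (S : {ffun 'I_k -> {set 'I_m}}) (t : {ffun 'I_k -> 'I_m}) :=
  [forall t' : {ffun 'I_k -> 'I_m},
    [forall i : 'I_k, (i < j) ==> (t' i \in S i)] &&
    [forall i : 'I_k, (j <= i) ==> (t' i == t i)]
    ==> (t' \in H)].

Lemma box_good0 S : [set t | box_good 0 S t] = H.
Proof.
apply/setP => t; rewrite inE; apply/forallP/idP => [/(_ t)|tH t'].
  by move=> /implyP; apply; apply/andP; split; apply/forallP => i //; rewrite eqxx.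
apply/implyP => /andP [_ /forallP agree].
by have -> : t' = t by apply/ffunP => i; apply/eqP/agree.
Qed.

Lemma box_good_extend (j : 'I_k) S (T : {set 'I_m}) t :
  T \subset [set v | box_good j S (ffun_upd t j v)] ->
  box_good j.+1 (ffun_upd S j T) t.
Proof.
move=> /subsetP fibre; apply/forallP => t'.
apply/implyP => /andP [/forallP inS /forallP agree].
have : t' j \in T by have := implyP (inS j) (ltnSn j); rewrite ffun_upd_same.
move=> /fibre; rewrite inE => /forallP /(_ t') /implyP; apply.
apply/andP; split; apply/forallP => i; apply/implyP => ij.
  have ij' : i != j by apply: contraTneq ij => ->; rewrite ltnn.
  by have := implyP (inS i) (ltnW ij); rewrite ffun_upd_other.
have [->|ij'] := eqVneq i j; first by rewrite ffun_upd_same.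
rewrite ffun_upd_other //; apply: (implyP (agree i)).
by rewrite ltn_neqAle ij andbT; apply: contra ij' => /eqP ji; apply/eqP/val_inj.
Qed.

Lemma dense_box_levels F : 4 * box_loss F k * F < m -> m ^ k <= 2 * #|H| ->
  forall j, j <= k -> exists S : {ffun 'I_k -> {set 'I_m}},
    (forall i : 'I_k, i < j -> #|S i| = F) /\
    m ^ k <= box_loss F j * #|[set t | box_good j S t]|.
Proof.
move=> Fsmall Hdense; elim=> [|j IH] jk.
  by exists [ffun=> set0]; rewrite box_good0.
have [S [SF Sgood]] := IH (ltnW jk).
pose jo : 'I_k := Ordinal jk.
set D := box_loss F j in Sgood.
have FsmallD : 4 * D * F < m.
  apply: leq_ltn_trans Fsmall; rewrite leq_mul // leq_mul //.
  exact/box_loss_mono/ltnW.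
have fibres : #|{ffun 'I_k -> 'I_m}| * m <=
    D * \sum_t #|[set v | ffun_upd t jo v \in [set t' | box_good j S t']]|.
  by rewrite sum_card_fibres card_ffun !card_ord mulnA leq_mul2r Sgood orbT.
have [|T [cardT many]] := common_subset FsmallD _ fibres.
  by rewrite card_ffun card_ord expn_gt0 card_ord (leq_ltn_trans _ FsmallD).
exists (ffun_upd S jo T); split.
  move=> i; rewrite ltnS leq_eqVlt => /orP [/eqP ij|ij].
    by rewrite (_ : i = jo) ?ffun_upd_same //; apply: val_inj.
  by rewrite ffun_upd_other ?SF //; apply: contraTneq ij => ->; rewrite ltnn.
move: many; rewrite card_ffun !card_ord => many; apply: (leq_trans many).
rewrite /= -/D leq_mul2l subset_leq_card ?orbT //; apply/subsetP => t.
rewrite !inE => sub; apply: (@box_good_extend jo).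
by apply/subsetP => v /(subsetP sub); rewrite !inE.
Qed.

Lemma dense_contains_box F : 4 * box_loss F k * F < m -> m ^ k <= 2 * #|H| ->
  exists S : {ffun 'I_k -> {set 'I_m}},
    (forall i, #|S i| = F) /\
    (forall t : {ffun 'I_k -> 'I_m}, (forall i, t i \in S i) -> t \in H).
Proof.
move=> Fsmall Hdense; have [S [SF Sgood]] := dense_box_levels Fsmall Hdense (leqnn k).
exists S; split=> [i|t inS]; first exact/SF/ltn_ord.
have [t0 t0good] : exists t0, t0 \in [set t | box_good k S t].
  apply/set0Pn; rewrite -card_gt0.
  have : 0 < m ^ k by rewrite expn_gt0 (leq_ltn_trans _ Fsmall).
  by move/leq_trans/(_ Sgood); rewrite muln_gt0 => /andP [].
move: t0good; rewrite inE => /forallP /(_ t) /implyP; apply.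
by apply/andP; split; apply/forallP => i; rewrite ?inS ?implybT // leqNgt ltn_ord.
Qed.

End DenseBox.

Lemma cyc_adj_sym k : symmetric (cyc_adj k).
Proof. by move=> i j; rewrite /cyc_adj orbC. Qed.

Lemma cyc_adjE k (i j : 'I_k) : cyc_adj k i j =
  (j == (if i.+1 == k then 0 else i.+1) :> nat) ||
  (i == (if j.+1 == k then 0 else j.+1) :> nat).
Proof.
have modS (n : 'I_k) : n.+1 %% k = if n.+1 == k then 0 else n.+1.
  by case: eqP => [->|nk]; rewrite ?modnn // modn_small //; have := ltn_ord n; lia.
by rewrite /cyc_adj !modS.
Qed.

Lemma cyc_adj_neq k (i j : 'I_k) : 1 < k -> cyc_adj k i j -> i != j.
Proof.
move=> k1; apply: contraTneq => <-; rewrite cyc_adjE orbb.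
by have := ltn_ord i; case: ifP => /eqP; lia.
Qed.

Lemma cycle_neighbours k (i : 'I_k) : 3 < k -> exists i1 i2 : 'I_k,
  [/\ i1 != i2, cyc_adj k i i1, cyc_adj k i i2 & ~~ cyc_adj k i1 i2].
Proof.
move=> k3; have ik := ltn_ord i.
have i1k : (if i.+1 == k then 0 else i.+1) < k by case: eqP; lia.
have i2k : (if i == 0 :> nat then k.-1 else i.-1) < k by case: eqP; lia.
exists (Ordinal i1k), (Ordinal i2k); rewrite !cyc_adjE -!val_eqE /=.
move: (nat_of_ord i) ik => n nk.
by repeat case: ifP => /eqP ?; repeat split; lia.
Qed.

Lemma Bgraph3_complete f (x y : 'I_3 * 'I_f) : Bgraph 3 f x y = (x != y).
Proof.
rewrite /Bgraph; suff -> : (x.1 == y.1) || cyc_adj 3 x.1 y.1 by rewrite andbT.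
by case: x y => [[[|[|[|?]]] ?] ?] [[[|[|[|?]]] ?] ?].
Qed.

Lemma Bgraph_sym k m : symmetric (Bgraph k m).
Proof. by move=> x y; rewrite /Bgraph eq_sym (eq_sym x.1) cyc_adj_sym. Qed.

Lemma edit_dist_rank_ordered (V : finType) (e e' : rel V) :
  symmetric e -> symmetric e' ->
  edit_dist e e' = #|[set p : V * V | (e p.1 p.2 != e' p.1 p.2) &&
                                      (enum_rank p.1 < enum_rank p.2)]|.
Proof.
move=> se se'; rewrite /edit_dist.
set A1 := [set p : V * V | _ && (enum_rank _ < _)].
pose swap (p : V * V) := (p.2, p.1).
have swapK : involutive swap by case.
set A2 := swap @^-1: A1.
have splitA : [set p : V * V | (p.1 != p.2) && (e p.1 p.2 != e' p.1 p.2)] = A1 :|: A2.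
  apply/setP => -[x y]; rewrite !inE /= (se y x) (se' y x).
  case: (eqVneq x y) => [->|xy]; first by rewrite ltnn andbF.
  have : enum_rank x != enum_rank y by apply: contra xy => /eqP /enum_rank_inj ->.
  by rewrite neq_ltn -andb_orr => /= ->; rewrite andbT.
have disjA : A1 :&: A2 = set0.
  apply/setP => -[x y]; rewrite !inE /=.
  by case: ltngtP; rewrite ?andbF.
rewrite splitA; have := cardsUI A1 A2.
rewrite disjA cards0 addn0 (card_preimset _ (inv_inj swapK)) => ->.
by rewrite addnn -muln2 mulnK.
Qed.

Lemma card_ffun_two_values (I T : finType) (a b : I) (x y : T) : a != b ->
  #|[set t : {ffun I -> T} | (t a == x) && (t b == y)]| = #|T| ^ (#|I| - 2).
Proof.
move=> ab.
pose A i := if i == a then [set x] else if i == b then [set y] else [set: T].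
have -> : [set t : {ffun I -> T} | (t a == x) && (t b == y)] = setXn A.
  apply/setP => t; rewrite in_setXn !inE; apply/andP/forallP.
    move=> [/eqP ta /eqP tb] i; rewrite /A.
    by have [->|_] := eqVneq i a; [|have [->|_] := eqVneq i b]; rewrite ?inE ?ta ?tb.
  move=> inA; have := inA a; have := inA b.
  by rewrite /A eqxx (negbTE ab) eq_sym (negbTE ab) eqxx !inE => -> ->.
rewrite cardsXn (eq_bigr (fun i => if ~~ ((i == a) || (i == b)) then #|T| else 1)).
  rewrite -big_mkcond prod_nat_const; congr (_ ^ _).
  have := cardC (pred2 a b); rewrite card2 ab.
  by rewrite (eq_card (B := [predC pred2 a b])) //; lia.
move=> i _; rewrite /A; case: (i == a); first by rewrite cards1.
by case: (i == b); rewrite ?cards1 ?cardsT.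
Qed.

Definition agreeing_transversals k m (e : rel ('I_k * 'I_m)) :=
  [set t : {ffun 'I_k -> 'I_m} |
    [forall i, forall j, (i != j) ==> (e (i, t i) (j, t j) == cyc_adj k i j)]].

Lemma many_agreeing_transversals k m (e : rel ('I_k * 'I_m)) :
  symmetric e -> 2 <= k -> 2 * edit_dist (Bgraph k m) e < m ^ 2 ->
  m ^ k <= 2 * #|agreeing_transversals e|.
Proof.
(* A transversal that does not agree meets some differing pair of vertices in distinct parts,
   and each such pair lies on [m ^ (k - 2)] transversals. *)
move=> se k2; rewrite edit_dist_rank_ordered //; last exact: Bgraph_sym.
set A := [set p | _]; set H := agreeing_transversals e => close.
pose C (q : ('I_k * 'I_m) * ('I_k * 'I_m)) :=
  [set t : {ffun 'I_k -> 'I_m} | (t q.1.1 == q.1.2) && (t q.2.1 == q.2.2)].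
pose R := [set q in A | q.1.1 != q.2.1].
have covered t : t \in ~: H -> exists2 q, q \in R & t \in C q.
  rewrite !inE => /forallPn [i /forallPn [j]]; rewrite negb_imply => /andP [ij differ].
  have rank_neq : enum_rank (i, t i) != enum_rank (j, t j).
    by apply: contra ij => /eqP /enum_rank_inj [->].
  have differB : Bgraph k m (i, t i) (j, t j) != e (i, t i) (j, t j).
    by rewrite /Bgraph /= xpair_eqE (negbTE ij) eq_sym.
  move: rank_neq; rewrite neq_ltn => /orP [] lt.
    by exists ((i, t i), (j, t j)); rewrite !inE /= ?eqxx ?differB ?lt ?ij.
  exists ((j, t j), (i, t i)); rewrite !inE /= ?eqxx ?lt ?andbT //.
  by rewrite Bgraph_sym se differB eq_sym ij.
have bad : #|~: H| <= #|A| * m ^ (k - 2).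
  apply: (leq_trans (card_le_sum_cover covered)).
  rewrite (eq_bigr (fun=> m ^ (k - 2))) => [|q]; last first.
    by rewrite inE => /andP [_ /card_ffun_two_values ->]; rewrite !card_ord.
  rewrite sum_nat_const leq_mul2r subset_leq_card ?orbT //.
  by apply/subsetP => q; rewrite inE => /andP [].
have total : #|H| + #|~: H| = m ^ k by rewrite cardsC card_ffun !card_ord.
have : m ^ k = m ^ 2 * m ^ (k - 2) by rewrite -expnD subnKC.
by move: bad total close; move: (m ^ k) (m ^ 2) (m ^ (k - 2)) #|H| #|~: H| #|A|; nia.
Qed.

Lemma box_cross_adj k m (e : rel ('I_k * 'I_m)) (S : {ffun 'I_k -> {set 'I_m}}) :
  (forall i, exists c, c \in S i) ->
  (forall t : {ffun 'I_k -> 'I_m}, (forall i, t i \in S i) -> t \in agreeing_transversals e) ->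
  forall i j a b, i != j -> a \in S i -> b \in S j -> e (i, a) (j, b) = cyc_adj k i j.
Proof.
move=> Sne box i j a b ij ai bj.
pose t0 := [ffun l => xchoose (Sne l)].
pose t := ffun_upd (ffun_upd t0 i a) j b.
have ti : t i = a by rewrite ffun_upd_other // ffun_upd_same.
have tj : t j = b by rewrite ffun_upd_same.
have : t \in agreeing_transversals e.
  apply: box => l; have [->|li] := eqVneq l j; first by rewrite tj.
  have [->|lj] := eqVneq l i; first by rewrite ti.
  by rewrite !ffun_upd_other // ffunE; apply: xchooseP.
by rewrite inE => /forallP /(_ i) /forallP /(_ j); rewrite ij ti tj => /eqP.
Qed.

Lemma C4_free_chord (V : finType) (e : rel V) : is_graph e -> ~ induced_in C4 e ->
  forall x x' y z, x != x' -> y != z -> e x y -> e y x' -> e x' z -> e z x ->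
  e x x' || e y z.
Proof.
move=> [se ie] noC4 x x' y z xx' yz exy eyx' ex'z ezx.
apply: contraT; rewrite negb_or => /andP [/negbTE nxx' /negbTE nyz]; case: noC4.
have edge_neq u v : e u v -> u != v by apply: contraTneq => ->; rewrite ie.
have eyx : e y x by rewrite se.
have ex'y : e x' y by rewrite se.
have ezx' : e z x' by rewrite se.
have exz : e x z by rewrite se.
have nx'x : e x' x = false by rewrite se.
have nzy : e z y = false by rewrite se.
have cycle_uniq : uniq [:: x; y; x'; z].
  by rewrite /= !inE !negb_or xx' yz !edge_neq.
exists (fun i : 'I_4 => nth x [:: x; y; x'; z] i); split.
  by move=> i j /eqP; rewrite nth_uniq // => /eqP /val_inj.
move=> [[|[|[|[|i]]]] ?] [[|[|[|[|j]]]] ?] //=.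
all: by rewrite /C4 /cyc_adj /= ?ie ?exy ?eyx ?ex'z ?ezx ?eyx' ?ex'y ?ezx' ?exz
                                  ?nxx' ?nyz ?nx'x ?nzy.
Qed.

Lemma induced_in_complete (W V : finType) (eH : rel W) (e : rel V) (Q : {set V}) :
  is_graph e -> (forall x y, eH x y = (x != y)) -> #|W| <= #|Q| ->
  {in Q &, forall x y, x != y -> e x y} -> induced_in eH e.
Proof.
move=> [_ ie] eHE WQ clique.
pose h (w : W) := enum_val (widen_ord WQ (enum_rank w)).
have h_inj : injective h.
  by move=> u v /enum_val_inj /(congr1 val) /= /val_inj /enum_rank_inj.
exists h; split=> // x y; rewrite eHE.
have [->|xy] := eqVneq x y; first by rewrite ie.
by rewrite clique ?enum_valP // (inj_eq h_inj).
Qed.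

Section InducedBlowup.

Variables (k m : nat) (e : rel ('I_k * 'I_m)) (S : {ffun 'I_k -> {set 'I_m}}).
Hypotheses (graph_e : is_graph e) (noC4 : ~ induced_in C4 e).
Hypothesis cross : forall i j a b, i != j -> a \in S i -> b \in S j ->
  e (i, a) (j, b) = cyc_adj k i j.

Lemma part_clique_of_nonedge i j a a' : i != j -> cyc_adj k i j ->
  a \in S i -> a' \in S i -> a != a' -> ~~ e (i, a) (i, a') ->
  {in S j &, forall b b', b != b' -> e (j, b) (j, b')}.
Proof.
move=> ij adj ai a'i aa' nonedge b b' bj b'j bb'.
have ji : j != i by rewrite eq_sym.
have := C4_free_chord graph_e noC4 (x := (i, a)) (x' := (i, a')) (y := (j, b)) (z := (j, b')).
rewrite (negbTE nonedge) !xpair_eqE !eqxx /=; apply=> //.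
all: by rewrite cross // cyc_adj_sym.
Qed.

Lemma clique_part_of_adjacent i j : i != j -> cyc_adj k i j ->
  exists l, {in S l &, forall a b, a != b -> e (l, a) (l, b)}.
Proof.
move=> ij adj.
case: (pickP [pred aa : 'I_m * 'I_m | [&& aa.1 \in S i, aa.2 \in S i,
                                        aa.1 != aa.2 & ~~ e (i, aa.1) (i, aa.2)]]).
  move=> [a a'] /and4P [ai a'i aa' nonedge]; exists j.
  exact: part_clique_of_nonedge ij adj ai a'i aa' nonedge.
move=> clique_i; exists i => a b ai bi ab.
by move: (clique_i (a, b)); rewrite /= ai bi ab /= => /negbFE.
Qed.

Lemma part_clique_of_neighbours i : 3 < k -> (forall l, exists c, c \in S l) ->
  {in S i &, forall a b, a != b -> e (i, a) (i, b)}.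
Proof.
move=> k3 Sne a b ai bi ab.
have [i1 [i2 [i12 adj1 adj2 nonadj12]]] := cycle_neighbours i k3.
have k1 : 1 < k by apply: ltn_trans k3.
have [ii1 ii2] := (cyc_adj_neq k1 adj1, cyc_adj_neq k1 adj2).
have [[c ci1] [d di2]] := (Sne i1, Sne i2).
have := C4_free_chord graph_e noC4 (x := (i, a)) (x' := (i, b)) (y := (i1, c)) (z := (i2, d)).
rewrite [e (i1, c) (i2, d)]cross // (negbTE nonadj12) orbF !xpair_eqE !eqxx /=; apply=> //.
- by rewrite (negbTE i12).
- by rewrite cross.
- by rewrite cross 1?eq_sym // cyc_adj_sym.
- by rewrite cross.
- by rewrite cross 1?eq_sym // cyc_adj_sym.
Qed.

Lemma induced_complete_of_clique_part (W : finType) (eH : rel W) j :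
  (forall x y, eH x y = (x != y)) -> #|W| <= #|S j| ->
  {in S j &, forall a b, a != b -> e (j, a) (j, b)} -> induced_in eH e.
Proof.
move=> eHE WS clique; apply: (induced_in_complete graph_e eHE (Q := setX [set j] (S j))).
  by rewrite cardsX cards1 mul1n.
move=> [j1 a] [j2 b]; rewrite !inE /= => /andP [/eqP -> ai] /andP [/eqP -> bi] ab.
by rewrite clique //; apply: contra ab => /eqP ->.
Qed.

Lemma induced_Bgraph_of_clique_parts f : (forall i, #|S i| = f) ->
  (forall i, {in S i &, forall a b, a != b -> e (i, a) (i, b)}) ->
  induced_in (Bgraph k f) e.
Proof.
move=> Sf clique; have [_ ie] := graph_e.
pose g i (a : 'I_f) := enum_val (cast_ord (esym (Sf i)) a) : 'I_m.
have gS i a : g i a \in S i by apply: enum_valP.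
have g_inj i : injective (g i) by move=> a b /enum_val_inj /cast_ord_inj.
exists (fun x => (x.1, g x.1 x.2)); split.
  by move=> [i a] [j b] /= [ij]; subst j => /g_inj ->.
move=> [i a] [j b]; rewrite /Bgraph /= !xpair_eqE.
have [<-|ij] := eqVneq i j; last by rewrite cross.
rewrite /= andbT; have [->|ab] := eqVneq a b; first by rewrite ie.
by rewrite clique ?gS // (inj_eq (g_inj i)).
Qed.

End InducedBlowup.

Lemma threshold_le_of_sq_le (k m d : nat) : 0 < k -> m ^ 2 <= 2 * d ->
  (1 / (2 * (k ^ 2)%:R) * ((k * m) ^ 2)%:R <= d%:R :> rat)%R.
Proof.
move=> k0 md.
have -> : (1 / (2 * (k ^ 2)%:R) * ((k * m) ^ 2)%:R = (m ^ 2)%:R / 2 :> rat)%R.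
  by rewrite expnMn natrM !natrX; field; rewrite pnatr_eq0 -lt0n.
by rewrite ler_pdivrMr ?ltr0n // -natrM ler_nat mulnC.
Qed.

Theorem lemma5p3 (k f : nat) :
  3 <= k -> 1 <= f ->
  exists n1 : nat, forall m : nat, n1 <= k * m ->
    far_from (Bgraph k m) (@ind_free_C4_B k f _)
      (1 / (2 * (k ^ 2)%:R))%R.
Proof.
move=> k3 f1; have k0 : 0 < k by apply: leq_trans k3.
pose F := if k == 3 then 3 * f else f.
exists (k * (4 * box_loss F k * F).+1) => m; rewrite leq_pmul2l //.
move=> Fsmall e graph_e [noC4 noB].
rewrite card_prod !card_ord; apply: threshold_le_of_sq_le => //.
rewrite leqNgt; apply/negP => close.
have dense := many_agreeing_transversals graph_e.1 (ltnW k3) close.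
have [S [SF box]] := dense_contains_box Fsmall dense.
have Sne i : exists c, c \in S i.
  by apply/set0Pn; rewrite -card_gt0 SF /F; case: ifP; lia.
have cross := box_cross_adj Sne box.
apply: noB; have [k3E|k3N] := eqVneq k 3.
  subst k; rewrite /F eqxx in SF.
  have [j clique] :=
    clique_part_of_adjacent graph_e noC4 cross (i := ord0) (j := ord_max) isT isT.
  apply: (induced_complete_of_clique_part graph_e (Bgraph3_complete (f := f)) _ clique).
  by rewrite SF card_prod !card_ord.
have k4 : 3 < k by rewrite ltn_neqAle eq_sym k3N.
apply: (induced_Bgraph_of_clique_parts graph_e cross (f := f)).
  by move=> i; rewrite SF /F (negbTE k3N).
by move=> i; apply: (part_clique_of_neighbours graph_e noC4 cross k4 Sne).
Qed.
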